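(* Let $m\ge1$, $n\ge1$, fix $t_0\in\mathbb{Z}^m$ and let $\mathcal{Z}=\{t\in\mathbb{Z}^m\mid t\ge t_0\}$. Let $T=(T_1,\dots,T_m)\in\mathbb{N}^m$, $T\ne0$. Let $A_\alpha\colon\mathcal{Z}\to\mathcal{M}_n(\mathbb{C})$, $\alpha\in\{1,\dots,m\}$, satisfy $$A_\alpha(t+1_\beta)A_\beta(t)=A_\beta(t+1_\alpha)A_\alpha(t),\quad \forall t\in\mathcal{Z},\ \forall\alpha,\beta,$$ and suppose $A_\alpha(t)$ is invertible for all $\alpha$ and all $t\in\mathcal{Z}$. Let $\Phi(t)=\chi(t,t_0)$, $t\in\mathcal{Z}$. Assume there exist a function $P\colon\mathcal{Z}\to\mathcal{M}_n(\mathbb{C})$ and constant invertible matrices $B_1,\dots,B_m\in\mathcal{M}_n(\mathbb{C})$ such that $P(t+T_\alpha\cdot1_\alpha)=P(t)$ for all $t\in\mathcal{Z}$ and all $\alpha$, $B_\alpha B_\beta=B_\beta B_\alpha$ for all $\alpha,\beta$, and $\Phi(t)=P(t)B_1^{t^1}\cdots B_m^{t^m}$ for all $t\ge t_0$. Consider the recurrences $$x(t+1_\alpha)=A_\alpha(t)x(t),\quad\forall t\ge t_0,\ \forall\alpha\in\{1,\dots,m\},\qquad (1)$$ $$y(t+1_\alpha)=B_\alpha y(t),\quad\forall t\ge t_0,\ \forall\alpha\in\{1,\dots,m\},\qquad (2)$$ for functions $x,y\colon\mathcal{Z}\to\mathbb{C}^n$. Then (each $P(t)$ being invertible) if $y$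 is a solution of (2), then $x(t):=P(t)y(t)$ is a solution of (1); and conversely, if $x$ is a solution of (1), then $y(t):=P(t)^{-1}x(t)$ is a solution of (2).
   Context: $\mathbb{N}=\{0,1,2,\dots\}$; $1_\alpha\in\mathbb{Z}^m$ has $1$ in position $\alpha$ and $0$ elsewhere; $s\le t$ in $\mathbb{Z}^m$ means $s^\alpha\le t^\alpha$ for all $\alpha$; $t=(t^1,\dots,t^m)$. Under the compatibility relations, for each $s\in\mathcal{Z}$ there is a unique $\chi(\cdot,s)\colon\{t\in\mathcal{Z}\mid t\ge s\}\to\mathcal{M}_n(\mathbb{C})$ with $\chi(s,s)=I_n$ and $\chi(t+1_\alpha,s)=A_\alpha(t)\chi(t,s)$ for all $t\ge s$ and all $\alpha$ (the transition matrix). Negative integer powers of invertible matrices are powers of the inverse. *)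

From HB Require Import structures.
From mathcomp Require Import all_boot all_order all_algebra.
From mathcomp Require Import reals complex.
Set Implicit Arguments. Unset Strict Implicit. Unset Printing Implicit Defensive.
Import Order.TTheory GRing.Theory Num.Theory.
Local Open Scope ring_scope.

(* points of Z^m, coordinates indexed by 'I_m (alpha = 1..m  <->  'I_m) *)
Definition pt (m : nat) := {ffun 'I_m -> int}.

Definition unit_pt (m : nat) (a : 'I_m) : pt m := [ffun b => ((b == a) : nat)%:Z].

Definition shift (m : nat) (t : pt m) (a : 'I_m) (k : int) : pt m :=
  [ffun b => t b + (if b == a then k else 0)].

Definition le_pt (m : nat) (s t : pt m) : Prop := forall a : 'I_m, s a <= t a.

Definition is_solution (C : ringType) (m n : nat) (t0 : pt m)
  (A : 'I_m -> pt m -> 'M[C]_n) (x : pt m -> 'cV[C]_n) : Prop :=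
  forall t, le_pt t0 t -> forall a : 'I_m, x (shift t a 1) = A a t *m x t.

(* Phi = chi(., t0): the transition matrix, i.e. the (unique) function with
   chi(t0,t0) = I and chi(t+1_a, t0) = A_a(t) chi(t, t0) for all t >= t0 and all a *)
Definition is_transition_from (C : ringType) (m n : nat) (t0 : pt m)
  (A : 'I_m -> pt m -> 'M[C]_n) (Phi : pt m -> 'M[C]_n) : Prop :=
  Phi t0 = 1%:M /\
  forall t, le_pt t0 t -> forall a : 'I_m, Phi (shift t a 1) = A a t *m Phi t.

(* Q t := B_1^{t^1} ... B_m^{t^m} satisfies Q(t + 1_a) = B_a Q(t) because the B_a commute,
   and the transition matrix is invertible since it is a product of the invertible A_a.
   Hence from Phi = P Q the defining recurrence of Phi becomes the intertwining relation
   A_a(t) P(t) = P(t + 1_a) B_a, and P(t) is invertible; the intertwining relation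
   transports solutions of y(t + 1_a) = B_a y(t) to solutions of (1) and back. *)
From HB Require Import structures.
From mathcomp Require Import all_boot all_order all_algebra.
From mathcomp Require Import reals complex.
From mathcomp Require Import zify.
Set Implicit Arguments. Unset Strict Implicit. Unset Printing Implicit Defensive.
Import Order.TTheory GRing.Theory Num.Theory.
Local Open Scope ring_scope.

Section Lattice.
Variables (m : nat) (t0 : pt m).

Definition height (t : pt m) : nat := (\sum_b `|t b - t0 b|%N)%N.

Lemma le_pt_shift1 t a : le_pt t0 t -> le_pt t0 (shift t a 1).
Proof. by move=> ht b; rewrite ffunE; have := ht b; case: (b == a) => /=; lia. Qed.

Lemma height0_eq t : height t = 0%N -> t = t0.
Proof.
move/eqP; rewrite sum_nat_eq0 => /forallP h0; apply/ffunP => b.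
by move: (h0 b) => /implyP/(_ isT); rewrite absz_eq0 subr_eq0 => /eqP.
Qed.

Lemma le_pt_shift_pred t : le_pt t0 t -> t <> t0 ->
  exists s a, [/\ le_pt t0 s, shift s a 1 = t & height s < height t]%N.
Proof.
move=> ht ntt0.
have [a lt_a] : exists a, t0 a < t a.
  case: (pickP (fun a => t0 a < t a)) => [a ha|hn]; first by exists a.
  by case: ntt0; apply/ffunP => b; have := hn b; have := ht b => /= ? ?; lia.
exists (shift t a (-1)), a; split.
- by move=> b; rewrite ffunE; have := ht b; case: eqP => [->|_] /=; lia.
- by apply/ffunP => b; rewrite !ffunE; case: (b == a) => /=; lia.
rewrite /height (bigD1 a) //= [X in (_ < X)%N](bigD1 a) //=.
rewrite (eq_bigr (fun b => `|t b - t0 b|%N)); last first.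
  by move=> b /negbTE hb; rewrite ffunE hb addr0.
by rewrite ffunE eqxx; move: lt_a; set S := (\sum_(i < m | i != a) _)%N; lia.
Qed.

Lemma le_pt_ind (Q : pt m -> Prop) :
  Q t0 -> (forall s a, le_pt t0 s -> Q s -> Q (shift s a 1)) ->
  forall t, le_pt t0 t -> Q t.
Proof.
move=> Q0 QS t; elim: {t}(height t) {-2}t (leqnn (height t)) => [|k IH] t hk ht.
  by move: hk; rewrite leqn0 => /eqP/height0_eq ->.
have [->|ntt0] := eqVneq t t0; first exact: Q0.
have [s [a [hs ets lt_st]]] := le_pt_shift_pred ht (elimN eqP ntt0).
rewrite -ets; apply: QS (IH s _ hs) => //; rewrite -ltnS; exact: leq_trans lt_st hk.
Qed.

End Lattice.

Lemma transition_unitmx (C : comUnitRingType) (m n : nat) (t0 : pt m)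
    (A : 'I_m -> pt m -> 'M[C]_n) (Phi : pt m -> 'M[C]_n) :
  (forall t, le_pt t0 t -> forall a, A a t \in unitmx) ->
  is_transition_from t0 A Phi -> forall t, le_pt t0 t -> Phi t \in unitmx.
Proof.
move=> hAinv [Phi0 PhiS]; apply: le_pt_ind; first by rewrite Phi0 unitmx1.
by move=> s a hs hu; rewrite PhiS // unitmx_mul hAinv.
Qed.

Section MultiPower.
Variables (R : unitRingType) (m : nat) (B : 'I_m -> R).
Hypothesis B_unit : forall a, B a \is a GRing.unit.
Hypothesis B_comm : forall a b, GRing.comm (B a) (B b).

Definition mpow (t : pt m) : R := \prod_(a < m) B a ^ t a.

Lemma mpow_unit t : mpow t \is a GRing.unit.
Proof.
apply: (big_ind (fun x => x \is a GRing.unit)) => [|x y hx hy|b _].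
- exact: unitr1.
- by rewrite unitrMl.
- exact: unitrXz.
Qed.

Lemma mpow_shift1 t a : mpow (shift t a 1) = B a * mpow t.
Proof.
rewrite /mpow (eq_bigr (fun b => B b ^ t b * (if b == a then B a else 1))); last first.
  move=> b _; rewrite ffunE exprzDr //.
  by case: eqP => [->|_]; rewrite ?expr1z ?expr0z.
rewrite prodrM_comm; last first.
  move=> b c _ _; case: (c == a); last exact: commr1.
  exact/commr_sym/commrXz.
rewrite -big_mkcond big_pred1_eq.
by apply/commr_sym/commr_prod => b _; apply/commrXz.
Qed.

End MultiPower.

Section Intertwining.
Variables (C : comUnitRingType) (m n : nat) (t0 : pt m).
Variables (A : 'I_m -> pt m -> 'M[C]_n) (B : 'I_m -> 'M[C]_n) (P : pt m -> 'M[C]_n).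
Hypothesis intertwine : forall t, le_pt t0 t -> forall a,
  A a t *m P t = P (shift t a 1) *m B a.

Lemma solution_intertwine y :
  is_solution t0 (fun a _ => B a) y -> is_solution t0 A (fun t => P t *m y t).
Proof. by move=> hy t ht a; rewrite hy // !mulmxA intertwine. Qed.

Lemma solution_intertwine_inv x :
  (forall t, le_pt t0 t -> P t \in unitmx) ->
  is_solution t0 A x -> is_solution t0 (fun a _ => B a) (fun t => invmx (P t) *m x t).
Proof.
move=> P_unit hx t ht a; rewrite hx // mulmxA.
have -> : A a t = P (shift t a 1) *m B a *m invmx (P t).
  by rewrite -intertwine // mulmxK // P_unit.
by rewrite !mulmxA mulVmx ?mul1mx // P_unit //; apply: le_pt_shift1.
Qed.

End Intertwining.

Lemma floquet_intertwine (C : comUnitRingType) (m n : nat) (t0 : pt m)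
    (A : 'I_m -> pt m -> 'M[C]_n.+1) (Phi P : pt m -> 'M[C]_n.+1)
    (B : 'I_m -> 'M[C]_n.+1) :
  (forall t, le_pt t0 t -> forall a, A a t \in unitmx) ->
  is_transition_from t0 A Phi ->
  (forall a, B a \in unitmx) -> (forall a b, B a *m B b = B b *m B a) ->
  (forall t, le_pt t0 t -> Phi t = P t *m mpow B t) ->
  (forall t, le_pt t0 t -> P t \in unitmx) /\
  (forall t, le_pt t0 t -> forall a, A a t *m P t = P (shift t a 1) *m B a).
Proof.
move=> hAinv hPhi B_unit B_comm Phi_eq.
have B_comm' a b : GRing.comm (B a) (B b) by rewrite /GRing.comm -!mulmxE.
have Q_unit := mpow_unit B_unit.
split=> [t ht | t ht a].
  have := transition_unitmx hAinv hPhi ht.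
  by rewrite Phi_eq // mulmxE -[_ \in unitmx]/(_ \is a GRing.unit) unitrMl.
apply: (mulIr (Q_unit t)); rewrite -!mulmxE -mulmxA -Phi_eq //.
rewrite -mulmxA mulmxE -mpow_shift1 // -mulmxE -Phi_eq; last exact: le_pt_shift1.
by rewrite hPhi.2.
Qed.

Theorem theorem2p12 (R : realType) (m n : nat) (hm : (0 < m)%N) (t0 : pt m)
  (T : 'I_m -> nat) (hT : exists a : 'I_m, T a <> 0%N)
  (A : 'I_m -> pt m -> 'M[R[i]]_n.+1)
  (hcomp : forall t, le_pt t0 t -> forall a b : 'I_m,
      A a (shift t b 1) *m A b t = A b (shift t a 1) *m A a t)
  (hAinv : forall t, le_pt t0 t -> forall a : 'I_m, A a t \in unitmx)
  (Phi : pt m -> 'M[R[i]]_n.+1) (hPhi : is_transition_from t0 A Phi)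
  (P : pt m -> 'M[R[i]]_n.+1) (B : 'I_m -> 'M[R[i]]_n.+1)
  (hPper : forall t, le_pt t0 t -> forall a : 'I_m, P (shift t a (T a)%:Z) = P t)
  (hBinv : forall a : 'I_m, B a \in unitmx)
  (hBcomm : forall a b : 'I_m, B a *m B b = B b *m B a)
  (hFloquet : forall t, le_pt t0 t -> Phi t = P t *m \prod_(a < m) (B a ^ (t a))) :
  (forall t, le_pt t0 t -> P t \in unitmx) /\
  (forall y : pt m -> 'cV[R[i]]_n.+1, is_solution t0 (fun a _ => B a) y ->
      is_solution t0 A (fun t => P t *m y t)) /\
  (forall x : pt m -> 'cV[R[i]]_n.+1, is_solution t0 A x ->
      is_solution t0 (fun a _ => B a) (fun t => invmx (P t) *m x t)).
Proof.
have [P_unit intertwine] := floquet_intertwine hAinv hPhi hBinv hBcomm hFloquet.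
by split=> //; split; [exact: solution_intertwine | move=> x; exact: solution_intertwine_inv].
Qed.
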